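(* Let $\omega\in\mathbb{F}_{q^n}$ and let $\mathbb{F}_{q^k}=\mathbb{F}_q(\omega)$ be the smallest subfield of $\mathbb{F}_{q^n}$ containing $\omega$. Then the smallest subplane (over a subfield $\mathbb{F}_{q^j}$, $j\mid n$) of $\mathrm{PG}(2,q^n)$ that is secant to $l_\infty$ and contains $\pi_{\omega,0}$ is an $\mathbb{F}_{q^k}$-subplane.
   Context: Points of $\mathrm{PG}(2,q^n)$ are written $(a,b,c)_{\mathbb{F}_{q^n}}$; $l_\infty$ is the line $c=0$. For $j\mid n$, an $\mathbb{F}_{q^j}$-subplane is a set $\{(su+tv+wz)_{\mathbb{F}_{q^n}}:(s,t,w)\in\mathbb{F}_{q^j}^3\setminus\{0\}\}$ for $\mathbb{F}_{q^n}$-independent $u,v,z\in\mathbb{F}_{q^n}^3$; it is secant to $l_\infty$ if it meets $l_\infty$ in $q^j+1$ points. For $\omega\in\mathbb{F}_{q^n}$, $\pi_{\omega,0}=\{(s,u,u\omega+t)_{\mathbb{F}_{q^n}}:(s,t,u)\in\mathbb{F}_q^3\setminus\{0\}\}$. *)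

From HB Require Import structures.
From mathcomp Require Import all_boot all_order all_algebra all_field.
Set Implicit Arguments. Unset Strict Implicit. Unset Printing Implicit Defensive.
Import GRing.Theory.
Local Open Scope ring_scope.

Section PG2.
Variable F : finFieldType.

(* The subfield F_{q^j} of F (meaningful for j | n when #|F| = q^n). *)
Definition Fsub (q j : nat) : {set F} := [set x : F | x ^+ (q ^ j)%N == x].

Definition vec3 (a b c : F) : 'rV[F]_3 := \row_(i < 3) nth 0 [:: a; b; c] i.

Definition pt (v : 'rV[F]_3) : {set 'rV[F]_3} := [set a *: v | a in [set: F]].

Definition linf : {set {set 'rV[F]_3}} :=
  [set pt v | v in [set v : 'rV[F]_3 | (v != 0) && (v ord0 (@Ordinal 3 2 isT) == 0)]].

Definition triples (q j : nat) : {set F * F * F} :=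
  [set x in setX (setX (Fsub q j) (Fsub q j)) (Fsub q j) | x != (0, 0, 0)].

Definition subplane_of (q j : nat) (u v z : 'rV[F]_3) : {set {set 'rV[F]_3}} :=
  [set pt (x.1.1 *: u + x.1.2 *: v + x.2 *: z) | x in triples q j].

Definition is_subplane (q j : nat) (S : {set {set 'rV[F]_3}}) : Prop :=
  exists u v z : 'rV[F]_3,
    row_free (col_mx u (col_mx v z)) /\ S = subplane_of q j u v z.

Definition secant (q j : nat) (S : {set {set 'rV[F]_3}}) : Prop :=
  #|S :&: linf| = (q ^ j).+1%N.

Definition pi_omega0 (q : nat) (omega : F) : {set {set 'rV[F]_3}} :=
  [set pt (vec3 x.1.1 x.2 (x.2 * omega + x.1.2)) | x in triples q 1].

End PG2.

(* The points (1,0,0), (0,1,w), (0,0,1), (1,1,w+1) of pi_{w,0} form a projective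
   frame.  Writing a subplane as the image of the Frobenius-fixed vectors under its
   generator matrix, the usual normalisation of a frame shows that any F_{q^j}-subplane
   through these four points is the F_{q^j}-span of (1,0,0), (0,1,w), (0,0,1).  This
   span meets l_oo in q^j+1 points when w is in F_{q^j} and only in (1,0,0) otherwise,
   so a secant F_{q^j}-subplane through pi_{w,0} forces F_q(w) = F_{q^k} <= F_{q^j},
   and the F_{q^k}-span of the frame is the smallest one. *)

From HB Require Import structures.
From mathcomp Require Import all_boot all_order all_algebra all_field all_fingroup all_solvable.
From mathcomp Require Import zify.

Set Implicit Arguments. Unset Strict Implicit. Unset Printing Implicit Defensive.
Import GRing.Theory.
Local Open Scope ring_scope.

Section FiniteField.
Variable F : finFieldType.

Lemma unit_prim_root : exists g : F, (#|F|.-1).-primitive_root g.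
Proof.
have F1 : (1 < #|F|)%N by exact: finNzRing_gt1.
have unity_units : all (#|F|.-1).-unity_root (enum [set~ (0 : F)]).
  apply/allP => x; rewrite mem_enum !inE => x0; rewrite unity_rootE.
  by apply/eqP/(mulIf x0); rewrite mul1r -exprSr prednK ?expf_card //; lia.
have N_gt0 : (0 < #|F|.-1)%N by lia.
have card_units : (#|F|.-1 <= size (enum [set~ (0 : F)%R]))%N by rewrite -cardE cardsC1.
have /hasP[g _ ?] := has_prim_root N_gt0 unity_units (enum_uniq _) card_units.
by exists g.
Qed.

Lemma card_unity_roots d : (0 < d)%N -> (d %| #|F|.-1)%N ->
  #|[set x : F | x ^+ d == 1]| = d.
Proof.
move=> d_gt0 /dvdnP[e eN]; have [g g_prim] := unit_prim_root.
have e_gt0 : (0 < e)%N.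
  by move: (prim_order_gt0 g_prim); rewrite eN; case: (e).
have z_prim : d.-primitive_root (g ^+ e).
  have := exp_prim_root g_prim e.
  by rewrite eN (gcdn_idPl (dvdn_mulr _ (dvdnn e))) mulKn.
have -> : [set x : F | x ^+ d == 1] = [set g ^+ e ^+ val i | i : 'I_d].
  apply/setP => x; rewrite inE; apply/eqP/imsetP => [/(prim_rootP z_prim)[i ->]|[i _ ->]].
    by exists i.
  by rewrite exprAC (prim_expr_order z_prim) expr1n.
rewrite card_imset ?card_ord // => i i' /eqP.
by rewrite (eq_prim_root_expr z_prim) !modn_small ?ltn_ord // => /eqP/val_inj.
Qed.

Lemma Fsub_unity q j : (0 < q)%N ->
  Fsub F q j = 0 |: [set x : F | x ^+ (q ^ j).-1 == 1].
Proof.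
move=> q_gt0; have Q_gt0 : (0 < q ^ j)%N by rewrite expn_gt0 q_gt0.
apply/setP => x; rewrite !inE -{1}(prednK Q_gt0) exprS.
have [->|x0] := eqVneq x 0; first by rewrite mul0r eqxx.
by rewrite -[X in _ == X]mulr1 (inj_eq (mulfI x0)).
Qed.

Lemma card_Fsub q n j : (1 < q)%N -> #|F| = (q ^ n)%N -> (0 < j)%N -> (j %| n)%N ->
  #|Fsub F q j| = (q ^ j)%N.
Proof.
move=> q_gt1 cardF j_gt0 /dvdnP[m n_eq].
have Q_gt1 : (1 < q ^ j)%N by rewrite -(expn0 q) ltn_exp2l.
have d_gt0 : (0 < (q ^ j).-1)%N by rewrite -ltnS prednK // ltnW.
rewrite Fsub_unity 1?ltnW // cardsU1 card_unity_roots //; last first.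
  by rewrite cardF n_eq mulnC expnM dvdn_pred_predX.
by rewrite inE expr0n gtn_eqF // eq_sym oner_eq0 add1n prednK // ltnW.
Qed.

Lemma Fsub1_sub q j : Fsub F q 1 \subset Fsub F q j.
Proof.
apply/subsetP => x; rewrite !inE expn1 => /eqP xq; apply/eqP.
by elim: j => [|j IHj]; rewrite ?expr1 // expnSr exprM IHj.
Qed.

Lemma frobenius_rmorph q n j : (0 < n)%N -> #|F| = (q ^ n)%N ->
  {s : {rmorphism F -> F} | forall x, s x = x ^+ (q ^ j)}.
Proof.
move=> n_gt0 cardF; have [p p_pr p_char] := finPcharP F.
have Qp : [pchar F].-nat (q ^ j)%N.
  rewrite (eq_pnat _ (GRing.pcharf_eq p_char)) pnatX.
  have : p.-nat (q ^ n)%N by rewrite -cardF (card_pprimeChar p_char) pnatX pnat_id.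
  by rewrite pnatX; case: (n) n_gt0 => // n' _; rewrite orbF => ->.
pose f (x : F) := x ^+ (q ^ j).
have fA : zmod_morphism f.
  by move=> x y; rewrite /f (GRing.exprDn_pchar _ _ Qp) (exprNn_pchar _ Qp).
have fM : monoid_morphism f by split=> [|x y]; rewrite /f ?exprMn ?expr1n.
pose fR : {rmorphism F -> F} :=
  HB.pack f (GRing.isZmodMorphism.Build _ _ f fA) (GRing.isMonoidMorphism.Build _ _ f fM).
by exists fR.
Qed.

End FiniteField.

Section Projective.
Variable F : finFieldType.
Implicit Types (a b c l om : F) (u v z : 'rV[F]_3).

Local Notation col3 u v z := (col_mx u (col_mx v z)).
Local Notation i1 := (@Ordinal 3 1 isT).
Local Notation i2 := (@Ordinal 3 2 isT).

Lemma vec3_inj a b c a' b' c' :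
  vec3 a b c = vec3 a' b' c' -> [/\ a = a', b = b' & c = c'].
Proof.
move=> e; have e_at i : vec3 a b c 0 i = vec3 a' b' c' 0 i by rewrite e.
by split; [move: (e_at ord0) | move: (e_at i1) | move: (e_at i2)];
  rewrite !mxE.
Qed.

Lemma vec3_0 : vec3 0 0 0 = 0 :> 'rV[F]_3.
Proof. by apply/rowP => -[[|[|[|i]]] ?]; rewrite !mxE. Qed.

Lemma vec3_eq0 a b c : (vec3 a b c == 0) = [&& a == 0, b == 0 & c == 0].
Proof.
by rewrite -vec3_0; apply/eqP/and3P => [/vec3_inj[-> -> ->] | [/eqP-> /eqP-> /eqP->]].
Qed.

Lemma vec3Z (a x y w : F) : a *: vec3 x y w = vec3 (a * x) (a * y) (a * w).
Proof. by apply/rowP => -[[|[|[|i]]] ?]; rewrite !mxE. Qed.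

Lemma vec3D (x y w x' y' w' : F) :
  vec3 x y w + vec3 x' y' w' = vec3 (x + x') (y + y') (w + w').
Proof. by apply/rowP => -[[|[|[|i]]] ?]; rewrite !mxE. Qed.

Lemma vec3_row (y : 'rV[F]_3) : y = vec3 (y 0 0) (y 0 i1) (y 0 i2).
Proof. by apply/rowP => -[[|[|[|i]]] ?]; rewrite !mxE //=; congr (y 0 _); apply: val_inj. Qed.

Lemma map_vec3 (f : {rmorphism F -> F}) (x y w : F) :
  map_mx f (vec3 x y w) = vec3 (f x) (f y) (f w).
Proof. by apply/rowP => -[[|[|[|i]]] ?]; rewrite !mxE //= rmorph0. Qed.

Lemma col3E u v z (i : 'I_(1 + (1 + 1))) (k : 'I_3) :
  col_mx u (col_mx v z) i k = nth 0 [:: u 0 k; v 0 k; z 0 k] i.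
Proof.
case: i => [[|[|[|i]]] lti] //.
- have -> : Ordinal lti = lshift (1 + 1) ord0 by apply/val_inj.
  by rewrite col_mxEu [ord0]ord1.
- have -> : Ordinal lti = rshift 1 (lshift 1 ord0) by apply/val_inj.
  by rewrite col_mxEd col_mxEu [ord0]ord1.
- have -> : Ordinal lti = rshift 1 (rshift 1 ord0) by apply/val_inj.
  by rewrite col_mxEd col_mxEd [ord0]ord1.
Qed.

Lemma mul_vec3 a b c u v z : vec3 a b c *m col3 u v z = a *: u + b *: v + c *: z.
Proof.
by apply/rowP => k; rewrite !mxE !big_ord_recl big_ord0 !col3E !mxE /= addr0 addrA.
Qed.

Lemma row_free_col3_neq0 u v z : row_free (col3 u v z) ->
  [/\ u != 0, v != 0, z != 0 & u + v + z != 0].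
Proof.
move=> free; have comb_neq0 a b c : vec3 a b c != 0 -> a *: u + b *: v + c *: z != 0.
  by rewrite -mul_vec3 mulmx_free_eq0.
split; [have := comb_neq0 1 0 0 | have := comb_neq0 0 1 0 | have := comb_neq0 0 0 1 |
        have := comb_neq0 1 1 1];
  by rewrite ?scale0r ?scale1r ?addr0 ?add0r vec3_eq0 ?oner_eq0 ?andbF; apply.
Qed.

Lemma mem_pt v : v \in pt v.
Proof. by apply/imsetP; exists 1; rewrite ?inE ?scale1r. Qed.

Lemma pt_eq_scale v v' : pt v = pt v' -> exists a, v = a *: v'.
Proof. by move=> e; have := mem_pt v; rewrite e => /imsetP[a _ ->]; exists a. Qed.

Lemma ptZ a v : a != 0 -> pt (a *: v) = pt v.
Proof.
move=> a0; apply/setP => P; apply/imsetP/imsetP => -[b _ ->].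
  by exists (b * a); rewrite ?inE ?scalerA.
by exists (b / a); rewrite ?inE ?scalerA ?divfK.
Qed.

Lemma pt_in_linf v : v != 0 -> (pt v \in linf F) = (v 0 i2 == 0).
Proof.
move=> v0; apply/imsetP/idP => [[v']|v2].
  by rewrite inE => /andP[_ /eqP v'2] /pt_eq_scale[a ->]; rewrite mxE v'2 mulr0.
by exists v; rewrite // inE v0.
Qed.

Lemma triplesP q j a b c :
  (((a, b), c) \in triples F q j) =
  [&& a \in Fsub F q j, b \in Fsub F q j, c \in Fsub F q j & vec3 a b c != 0].
Proof. by rewrite inE !in_setX /= vec3_eq0 !xpair_eqE -!andbA. Qed.

Lemma subplane_of_subset q k j u v z : Fsub F q k \subset Fsub F q j ->
  subplane_of q k u v z \subset subplane_of q j u v z.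
Proof.
move=> sub_kj; apply: imsetS; apply/subsetP => -[[a b] c].
by rewrite !triplesP => /and4P[/(subsetP sub_kj)-> /(subsetP sub_kj)-> /(subsetP sub_kj)->].
Qed.

Definition omega_subplane q j om :=
  subplane_of q j (vec3 1 0 0) (vec3 0 1 om) (vec3 0 0 1).

Lemma omega_comb om a b c :
  a *: vec3 1 0 0 + b *: vec3 0 1 om + c *: vec3 0 0 1 = vec3 a b (b * om + c).
Proof. by rewrite !vec3Z !vec3D !mulr0 !mulr1 !addr0 !add0r. Qed.

Lemma row_free_omega om : row_free (col3 (vec3 1 0 0) (vec3 0 1 om) (vec3 0 0 1)).
Proof.
apply: inj_row_free => x; rewrite [x]vec3_row mul_vec3 omega_comb -vec3_0.
by case/vec3_inj => -> ->; rewrite mul0r add0r => ->.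
Qed.

Lemma omega_vec_neq0 om a b c : vec3 a b c != 0 -> vec3 a b (b * om + c) != 0.
Proof. by rewrite -omega_comb -mul_vec3 mulmx_free_eq0 ?row_free_omega. Qed.

Lemma omega_pt_in_linf om a b c : vec3 a b c != 0 ->
  (pt (vec3 a b (b * om + c)) \in linf F) = (b * om + c == 0).
Proof. by move=> abc0; rewrite pt_in_linf ?omega_vec_neq0 // mxE. Qed.

Lemma omega_subplaneE q j om : omega_subplane q j om =
  [set pt (vec3 x.1.1 x.1.2 (x.1.2 * om + x.2)) | x in triples F q j].
Proof. by apply: eq_imset => -[[a b] c]; rewrite /= omega_comb. Qed.

Lemma pi_omega0_sub q j om : pi_omega0 q om \subset omega_subplane q j om.
Proof.
apply/subsetP => P /imsetP[[[a b] c]]; rewrite triplesP => /and4P[aK bK cK abc0] ->.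
rewrite omega_subplaneE; apply/imsetP; exists ((a, c), b) => //.
rewrite triplesP !(subsetP (Fsub1_sub F q j)) //=.
by move: abc0; rewrite !vec3_eq0 [(c == 0) && _]andbC.
Qed.

Lemma omega_frame_in_pi q om : (0 < q)%N ->
  [/\ pt (vec3 1 0 0) \in pi_omega0 q om, pt (vec3 0 1 om) \in pi_omega0 q om,
      pt (vec3 0 0 1) \in pi_omega0 q om &
      pt (vec3 1 0 0 + vec3 0 1 om + vec3 0 0 1) \in pi_omega0 q om].
Proof.
move=> q_gt0; have K0 : (0 : F) \in Fsub F q 1 by rewrite inE expr0n expn1 gtn_eqF.
have K1 : (1 : F) \in Fsub F q 1 by rewrite inE expr1n.
have in_pi a b c : a \in Fsub F q 1 -> b \in Fsub F q 1 -> c \in Fsub F q 1 ->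
    vec3 a b c != 0 -> pt (vec3 a c (c * om + b)) \in pi_omega0 q om.
  by move=> aK bK cK abc0; apply/imsetP; exists ((a, b), c); rewrite ?triplesP ?aK ?bK ?cK.
rewrite !vec3D !addr0 !add0r.
split; [have := in_pi 1 0 0 | have := in_pi 0 0 1 | have := in_pi 0 1 0 | have := in_pi 1 1 1];
  by rewrite ?mul0r ?mul1r ?add0r ?addr0 vec3_eq0 ?oner_eq0 ?andbF; apply.
Qed.

Section FixedField.
Variables (q j : nat) (s : {rmorphism F -> F}).
Hypothesis sE : forall x, s x = x ^+ (q ^ j).

Lemma Fsub_fixed x : (x \in Fsub F q j) = (s x == x).
Proof. by rewrite inE sE. Qed.

Definition fixed_vectors : {set 'rV[F]_3} := [set y | (y != 0) && (map_mx s y == y)].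

Lemma subplane_ofE u v z :
  subplane_of q j u v z = [set pt (y *m col3 u v z) | y in fixed_vectors].
Proof.
apply/setP => P; apply/imsetP/imsetP => [[[[a b] c]] | [y]].
  rewrite triplesP !Fsub_fixed => /and4P[/eqP sa /eqP sb /eqP sc abc0] ->.
  by exists (vec3 a b c); rewrite ?mul_vec3 // inE abc0 map_vec3 sa sb sc /=.
rewrite inE => /andP[y0 /eqP fixy] ->.
have fix_at i : s (y 0 i) == y 0 i by rewrite -[in X in _ == X]fixy mxE.
exists ((y 0 0, y 0 i1), y 0 i2); last by rewrite /= -mul_vec3 -vec3_row.
by rewrite triplesP !Fsub_fixed !fix_at -vec3_row.
Qed.

Lemma imset_fixed_vectors_mul (Y M : 'M[F]_3) : map_mx s Y = Y -> Y \in unitmx ->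
  [set pt (y *m (Y *m M)) | y in fixed_vectors] = [set pt (y *m M) | y in fixed_vectors].
Proof.
have fixed_mul (Z : 'M_3) (y : 'rV_3) : map_mx s Z = Z -> Z \in unitmx ->
    y \in fixed_vectors -> y *m Z \in fixed_vectors.
  move=> fixZ unitZ; rewrite !inE => /andP[y0 /eqP fixy].
  by rewrite map_mxM fixZ fixy eqxx andbT mulmx_free_eq0 ?row_free_unit.
move=> fixY unitY; apply/setP => P; apply/imsetP/imsetP => -[y fixy ->].
  by exists (y *m Y); rewrite ?mulmxA ?fixed_mul.
exists (y *m invmx Y); last by rewrite mulmxA mulmxKV.
by apply: fixed_mul; rewrite ?map_invmx ?fixY ?unitmx_inv.
Qed.

Lemma fixed_ratio m n (x : 'rV[F]_m) (Y : 'M[F]_(m, n)) (y : 'rV[F]_n) l :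
  row_free Y -> map_mx s Y = Y -> map_mx s y = y -> l != 0 -> x *m Y = l *: y ->
  map_mx s x = (s l / l) *: x.
Proof.
move=> freeY fixY fixy l0 xY; apply: (row_free_inj freeY) => /=.
by rewrite -{1}fixY -map_mxM xY map_mxZ fixy -scalemxAl xY scalerA divfK.
Qed.

Lemma subplane_of_pt u v z (w : 'rV[F]_3) : pt w \in subplane_of q j u v z -> w != 0 ->
  exists l y, [/\ l != 0, map_mx s y = y & w = l *: (y *m col3 u v z)].
Proof.
rewrite subplane_ofE => /imsetP[y]; rewrite inE => /andP[_ /eqP fixy] /pt_eq_scale[l wE] w0.
by exists l, y; split=> //; apply: contraNneq w0 => l0; rewrite wE l0 scale0r.
Qed.

Section Frame.
Variables (u v z e1 e2 e3 : 'rV[F]_3).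
Hypotheses (freeM : row_free (col3 u v z)) (freeE : row_free (col3 e1 e2 e3)).
Hypotheses (e1T : pt e1 \in subplane_of q j u v z) (e2T : pt e2 \in subplane_of q j u v z).
Hypotheses (e3T : pt e3 \in subplane_of q j u v z).
Hypothesis (e4T : pt (e1 + e2 + e3) \in subplane_of q j u v z).

Lemma frame_normal : exists l (Y : 'M[F]_(1 + (1 + 1), 3)),
  [/\ l != 0, map_mx s Y = Y, Y \in unitmx & col3 e1 e2 e3 = l *: (Y *m col3 u v z)].
Proof.
have [e1_0 e2_0 e3_0 e4_0] := row_free_col3_neq0 freeE.
have [l1 [y1 [l1_0 fix1 e1E]]] := subplane_of_pt e1T e1_0.
have [l2 [y2 [l2_0 fix2 e2E]]] := subplane_of_pt e2T e2_0.
have [l3 [y3 [l3_0 fix3 e3E]]] := subplane_of_pt e3T e3_0.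
have [l4 [y4 [l4_0 fix4 e4E]]] := subplane_of_pt e4T e4_0.
pose Y0 := col3 y1 y2 y3.
have fixY0 : map_mx s Y0 = Y0 by rewrite /Y0 !map_col_mx fix1 fix2 fix3.
have freeY0 : row_free Y0.
  apply: inj_row_free => x xY0; apply/eqP; rewrite [x]vec3_row vec3_eq0.
  have : vec3 (x 0 0 / l1) (x 0 i1 / l2) (x 0 i2 / l3) *m col3 e1 e2 e3 = 0.
    rewrite mul_vec3 e1E e2E e3E !scalerA !divfK // !scalemxAl -!mulmxDl -mul_vec3.
    by rewrite -vec3_row xY0 mul0mx.
  move/eqP; rewrite mulmx_free_eq0 // vec3_eq0 !mulf_eq0 !invr_eq0.
  by rewrite (negbTE l1_0) (negbTE l2_0) (negbTE l3_0) !orbF.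
have rel : vec3 l1 l2 l3 *m Y0 = l4 *: y4.
  apply: (row_free_inj freeM); rewrite /= mul_vec3 -scalemxAl -e4E !mulmxDl.
  by rewrite -!scalemxAl -e1E -e2E -e3E.
(* The [y_i] are fixed and independent, so [s] multiplies every [l_i] by the same [mu]. *)
have := fixed_ratio freeY0 fixY0 fix4 l4_0 rel; rewrite map_vec3 vec3Z.
case/vec3_inj; set mu := s l4 / l4 => s1 s2 s3.
have mu0 : mu != 0 by rewrite mulf_neq0 ?invr_eq0 ?fmorph_eq0.
have fix_ratio l : s l = mu * l -> s (l / l1) = l / l1.
  by move=> sl; rewrite fmorph_div sl s1 -mulf_div divff ?mul1r.
have l1K l : l1 * (l / l1) = l by rewrite mulrCA divff ?mulr1.
pose Y := col3 y1 ((l2 / l1) *: y2) ((l3 / l1) *: y3).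
have EY : col3 e1 e2 e3 = l1 *: (Y *m col3 u v z).
  by rewrite !mul_col_mx !scale_col_mx -!scalemxAl !scalerA !l1K -e1E -e2E -e3E.
exists l1, Y; split=> //.
  by rewrite !map_col_mx !map_mxZ fix1 fix2 fix3 !fix_ratio.
have := freeE; rewrite row_free_unit EY unitmxZ ?unitfE // unitmx_mul.
by case/andP.
Qed.

Lemma subplane_of_frame : subplane_of q j u v z = subplane_of q j e1 e2 e3.
Proof.
have [l [Y [l0 fixY unitY EY]]] := frame_normal.
rewrite !subplane_ofE EY.
under [RHS]eq_imset => y do rewrite -scalemxAr ptZ //.
by rewrite imset_fixed_vectors_mul.
Qed.

End Frame.

Lemma omega_subplane_linf_sub om : om \notin Fsub F q j ->
  omega_subplane q j om :&: linf F \subset [set pt (vec3 1 0 0)].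
Proof.
move=> om_notK; apply/subsetP => P; rewrite inE omega_subplaneE => /andP[/imsetP[[[a b] c]]].
rewrite triplesP !Fsub_fixed => /and4P[/eqP sa /eqP sb /eqP sc abc0] -> /=.
rewrite omega_pt_in_linf // addr_eq0 => /eqP bom; rewrite inE.
have [b0|b0] := eqVneq b 0; last first.
  case/negP: om_notK; rewrite Fsub_fixed.
  have -> : om = - c / b by rewrite -bom mulrC mulKf.
  by rewrite fmorph_div rmorphN sb sc.
have c0 : c = 0 by apply/eqP; rewrite -oppr_eq0 -bom b0 mul0r.
rewrite b0 c0 mul0r addr0 in abc0 *.
have a0 : a != 0 by move: abc0; rewrite vec3_eq0 !eqxx !andbT.
by rewrite -(ptZ (vec3 1 0 0) a0) vec3Z mulr1 mulr0.
Qed.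

Lemma omega_subplane_linfE om : om \in Fsub F q j ->
  omega_subplane q j om :&: linf F = pt (vec3 0 1 0) |: [set pt (vec3 1 b 0) | b in Fsub F q j].
Proof.
rewrite Fsub_fixed => /eqP som; apply/setP => P; rewrite !inE omega_subplaneE.
apply/andP/orP => [[/imsetP[[[a b] c] abc ->]] | ].
  move: abc; rewrite triplesP !Fsub_fixed /= => /and4P[/eqP sa /eqP sb _ abc0].
  have := omega_vec_neq0 om abc0; rewrite omega_pt_in_linf // => + /eqP lin.
  rewrite lin => ab0; have [a0|a0] := eqVneq a 0.
    have b0 : b != 0 by move: ab0; rewrite a0 vec3_eq0 eqxx /= andbT.
    by left; rewrite a0 -(ptZ (vec3 0 1 0) b0) vec3Z mulr0 mulr1.
  right; apply/imsetP; exists (b / a); first by rewrite Fsub_fixed fmorph_div sa sb.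
  by rewrite -(ptZ (vec3 1 (b / a) 0) a0) vec3Z mulr1 mulr0 mulrC divfK.
have in_linf b : pt (vec3 1 b 0) \in linf F.
  by rewrite pt_in_linf ?vec3_eq0 ?oner_eq0 // mxE.
case=> [/eqP-> | /imsetP[b bK ->]]; split.
- apply/imsetP; exists ((0, 1), - om); last by rewrite /= mul1r addrN.
  by rewrite triplesP !Fsub_fixed rmorph0 rmorph1 rmorphN som !eqxx vec3_eq0 oner_eq0 andbF.
- by rewrite pt_in_linf ?vec3_eq0 ?oner_eq0 ?andbF // mxE.
- apply/imsetP; exists ((1, b), - (b * om)); last by rewrite /= addrN.
  move: bK; rewrite triplesP !Fsub_fixed rmorph1 rmorphN rmorphM som => /eqP->.
  by rewrite !eqxx vec3_eq0 oner_eq0.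
- exact: in_linf.
Qed.

Lemma card_omega_subplane_linf om : om \in Fsub F q j ->
  #|omega_subplane q j om :&: linf F| = #|Fsub F q j|.+1.
Proof.
move=> omK; rewrite omega_subplane_linfE // cardsU1 card_imset => [|b b'].
  have -> : pt (vec3 0 1 0) \notin [set pt (vec3 1 b 0) | b in Fsub F q j].
    apply/imsetP => -[b _ /pt_eq_scale[a]]; rewrite vec3Z => /vec3_inj[].
    by rewrite mulr1 => <-; rewrite mul0r => /eqP; rewrite oner_eq0.
  by rewrite add1n.
by move/pt_eq_scale=> [a]; rewrite vec3Z => /vec3_inj[]; rewrite mulr1 => <-; rewrite mul1r.
Qed.

Lemma secant_omega_subplane om : (0 < q)%N ->
  secant q j (omega_subplane q j om) -> om \in Fsub F q j.
Proof.
move=> q_gt0 sec; apply: contraT => /omega_subplane_linf_sub/subset_leq_card.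
by rewrite cards1 sec ltnS leqn0 expn_eq0 gtn_eqF.
Qed.

End FixedField.
End Projective.

Theorem lemma3p3 (F : finFieldType) (q n k : nat) (omega : F) :
  (1 < q)%N -> (0 < n)%N -> #|F| = (q ^ n)%N ->
  (k %| n)%N -> omega \in Fsub F q k ->
  (forall j : nat, (j %| n)%N -> omega \in Fsub F q j -> Fsub F q k \subset Fsub F q j) ->
  exists S : {set {set 'rV[F]_3}},
    [/\ is_subplane q k S, secant q k S, pi_omega0 q omega \subset S &
      forall (j : nat) (T : {set {set 'rV[F]_3}}),
        (j %| n)%N -> is_subplane q j T -> secant q j T ->
        pi_omega0 q omega \subset T -> S \subset T].
Proof.
move=> q_gt1 n_gt0 cardF k_dvd_n omega_k omega_min.
have q_gt0 : (0 < q)%N by apply: ltnW.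
have k_gt0 : (0 < k)%N by apply: dvdn_gt0 k_dvd_n.
have [sk skE] := frobenius_rmorph k n_gt0 cardF.
exists (omega_subplane q k omega); split.
- by exists (vec3 1 0 0), (vec3 0 1 omega), (vec3 0 0 1); split; first exact: row_free_omega.
- rewrite /secant (card_omega_subplane_linf skE omega_k).
  by rewrite (card_Fsub q_gt1 cardF k_gt0 k_dvd_n).
- exact: pi_omega0_sub.
move=> j T j_dvd_n [u [v [z [freeM ->]]]] secT piT.
have [sj sjE] := frobenius_rmorph j n_gt0 cardF.
have [p1 p2 p3 p4] := omega_frame_in_pi omega q_gt0.
rewrite (subplane_of_frame sjE freeM (row_free_omega omega)) ?(subsetP piT) // in secT *.
apply: subplane_of_subset; apply: omega_min => //.
exact: (secant_omega_subplane sjE (om := omega) q_gt0 secT).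
Qed.
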